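(* Let $\beta>0$, $k\in\mathbb N$ with $\beta\in(2k,2k+2]$, $f\in\mathcal H(\beta,\mathcal P)$ with $\mathcal P=\{\gamma,l^+,L,\varepsilon,C,\alpha,\xi,M\}$, and $p\in(0,1)$. Then for all $x\in\mathbb R$: (1) for every positive integer $i$ and every $\sigma<1-p^{1/i}$, $K_\sigma^if(x)\le M\big(\frac{2}{\sqrt3}\big)^i\psi(px)$; (2) for every $\sigma<1-p^{1/k}$ (read as $\sigma<1$ when $k=0$), $\max\big(f_k(x),g_k(x),\tfrac12h_k(x)\big)\le 2M\big(\frac4{\sqrt3}\big)^k\psi(px)$.
   Context: $\psi(x)=\pi^{-1/2}e^{-x^2}$, $\psi_\sigma(x)=\sigma^{-1}\psi(x/\sigma)$, $K_\sigma g=g*\psi_\sigma$, $K_\sigma^i$ its $i$-fold iterate, $\Delta_\sigma g=K_\sigma g-g$. Given $f$ and $\sigma$: $f_0=f$, $f_{j+1}=f-\Delta_\sigma f_j$; $J_{\sigma,k}=\{x:f_k(x)>\frac12f(x)\}$; $g_k=f_k\mathbf 1_{J_{\sigma,k}}+\frac12f\mathbf 1_{J_{\sigma,k}^c}$; $h_k=g_k/\int g_k$. For $\beta>0$, $r$ is the largest integer strictly less than $\beta$; $\mathcal H(\beta,\mathcal P)$ ($L$ polynomial, others positive constants) is the set of probability densities $f$ with $\ln f$ $r$ times differentiable, $|(\ln f)^{(r)}(x)-(\ln f)^{(r)}(y)|\le r!L(x)|y-x|^{\beta-r}$ for $|x-y|\le\gamma$, $|(\ln f)^{(j)}(0)|\le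 l^+$; $\int|(\ln f)^{(j)}|^{(2\beta+\varepsilon)/j}f\le C$, $\int|L|^{2+\varepsilon/\beta}f\le C$; $f(x)\le M\psi(x)$; $f>0$ nondecreasing on $(-\infty,-\alpha)$, nonincreasing on $(\alpha,\infty)$, $f\ge\xi$ on $[-\alpha,\alpha]$. *)

From HB Require Import structures.
From mathcomp Require Import all_boot all_order all_algebra.
From mathcomp Require Import all_classical all_reals all_analysis.
Set Implicit Arguments. Unset Strict Implicit. Unset Printing Implicit Defensive.
Import Order.TTheory GRing.Theory Num.Theory.
Import numFieldNormedType.Exports.
Local Open Scope classical_set_scope.
Local Open Scope ring_scope.

Section Defs.
Variable R : realType.

Definition leb := (@lebesgue_measure R).

Definition psi (x : R) : R := (Num.sqrt pi)^-1 * expR (- x ^+ 2).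
Definition psi_s (s : R) (x : R) : R := s^-1 * psi (x / s).
Definition Kop (s : R) (g : R -> R) : R -> R :=
  fun x => Rintegral leb setT (fun y => g y * psi_s s (x - y)).
Definition Kiter (s : R) (i : nat) (g : R -> R) : R -> R := iter i (Kop s) g.
Definition Delta (s : R) (g : R -> R) : R -> R := fun x => Kop s g x - g x.
Fixpoint fseq (s : R) (f : R -> R) (j : nat) : R -> R :=
  match j with
  | 0%N => f
  | j'.+1 => fun x => f x - Delta s (fseq s f j') x
  end.
Definition Jset (s : R) (f : R -> R) (k : nat) : set R :=
  [set x | fseq s f k x > f x / 2].
Definition gseq (s : R) (f : R -> R) (k : nat) : R -> R :=
  fun x => fseq s f k x * (\1_(Jset s f k) x) + f x / 2 * (\1_(~` Jset s f k) x).
Definition hseq (s : R) (f : R -> R) (k : nat) : R -> R :=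
  fun x => gseq s f k x / Rintegral leb setT (gseq s f k).

Definition inH (beta gamma lplus : R) (L : {poly R}) (eps C alpha xi M : R)
  (f : R -> R) : Prop :=
  let l := fun x => ln (f x) in
  forall r : nat, (r%:R < beta <= r.+1%:R) ->
  (
      measurable_fun setT f /\ (forall x, 0 <= f x) /\
      (\int[leb]_x (f x)%:E = 1)%E /\
      (forall j x, (j < r)%N -> derivable (derive1n j l) x 1) /\
      (forall x y, `|x - y| <= gamma ->
         `|derive1n r l x - derive1n r l y|
           <= (r`!)%:R * L.[x] * (`|y - x| `^ (beta - r%:R))) /\
      (forall j, (1 <= j <= r)%N -> `|derive1n j l 0| <= lplus) /\
      (forall j, (1 <= j <= r)%N ->
         (\int[leb]_x ((`|derive1n j l x| `^ ((2 * beta + eps) / j%:R)) * f x)%:E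
            <= C%:E)%E) /\
      (\int[leb]_x ((`|L.[x]| `^ (2 + eps / beta)) * f x)%:E <= C%:E)%E /\
      (
          (forall x, f x <= M * psi x) /\
          (forall x, x < - alpha -> 0 < f x) /\
          (forall x, alpha < x -> 0 < f x) /\
          (forall x y, x <= y -> y < - alpha -> f x <= f y) /\
          (forall x y, alpha < x -> x <= y -> f y <= f x) /\
          (forall x, - alpha <= x <= alpha -> xi <= f x))).

End Defs.

From HB Require Import structures.
From mathcomp Require Import all_boot all_order all_algebra.
From mathcomp Require Import all_classical all_reals all_analysis.
From mathcomp Require Import measurable_realfun ring lra.
Set Implicit Arguments. Unset Strict Implicit. Unset Printing Implicit Defensive.
Import Order.TTheory GRing.Theory Num.Theory.
Import numFieldNormedType.Exports.
Local Open Scope classical_set_scope.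
Local Open Scope ring_scope.

(* Gaussian kernels form a convolution semigroup, psi_t * psi_s = psi_(sqrt (t^2 + s^2)), so the
   tail bound f <= M psi propagates to K_s^i f <= M psi_(sqrt (1 + i s^2)); the constraint on s
   gives p^2 (1 + i s^2) <= 1, whence psi_(sqrt (1 + i s^2)) y <= psi (p y).  The recursion
   f_(j+1) = f + f_j - K_s f_j writes f_k as a combination of the K_s^m f, m <= k, with absolute
   coefficient sum at most 2^(k+1) - 1.  Finally f/2 <= g_k <= max (f_k, f/2), so g_k has
   integral at least 1/2 and h_k <= 2 g_k.  The factors (2/sqrt 3)^i and (4/sqrt 3)^k are
   larger than what this argument needs. *)

Section Gaussian.
Variable R : realType.
Implicit Types s t x y : R.

Lemma psi_gt0 y : 0 < psi y.
Proof. by rewrite mulr_gt0 ?expR_gt0 // invr_gt0 sqrtr_gt0 pi_gt0. Qed.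

Lemma psi_ge0 y : 0 <= psi y.
Proof. exact/ltW/psi_gt0. Qed.

Lemma psi_s_ge0 t y : 0 < t -> 0 <= psi_s t y.
Proof. by move=> t0; rewrite mulr_ge0 ?psi_ge0 // invr_ge0 ltW. Qed.

Lemma psi_s1 : psi_s 1 = @psi R.
Proof. by apply/funext => y; rewrite /psi_s invr1 mul1r mulr1. Qed.

Lemma measurable_psi_s s : measurable_fun setT (psi_s s).
Proof.
apply: measurable_funM => //; apply: measurable_funM => //.
apply: measurableT_comp => //; apply: measurableT_comp => //.
by apply: measurable_funX; exact: measurable_funM.
Qed.

Lemma psi_s_le_psi t p y : 1 <= t -> 0 <= p -> p ^+ 2 * t ^+ 2 <= 1 ->
  psi_s t y <= psi (p * y).
Proof.
move=> t1 p0 pt; have t0 : 0 < t by apply: lt_le_trans t1.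
rewrite /psi_s /psi mulrCA ler_wpM2l ?invr_ge0 ?sqrtr_ge0 //.
apply: le_trans (_ : expR (- (y / t) ^+ 2) <= _).
  by rewrite ler_piMl ?expR_ge0 // invr_le1 // unitfE gt_eqF.
rewrite ler_expR lerN2 expr_div_n exprMn ler_pdivlMr ?exprn_gt0 //.
by rewrite mulrAC ler_piMl ?sqr_ge0.
Qed.

Lemma psi_s_mul_normal_pdf t s x y : 0 < t -> 0 < s ->
  let r := Num.sqrt (t ^+ 2 + s ^+ 2) in
  psi_s t y * psi_s s (x - y) =
  psi_s r x * normal_pdf (x * t ^+ 2 / r ^+ 2) (t * s / (r * Num.sqrt 2)) y.
Proof.
move=> t0 s0 r.
have r0 : 0 < r by rewrite sqrtr_gt0 addr_gt0 ?exprn_gt0.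
have r2 : r ^+ 2 = t ^+ 2 + s ^+ 2 by rewrite sqr_sqrtr // addr_ge0 ?sqr_ge0.
have ts_neq0 : t ^+ 2 + s ^+ 2 != 0 by rewrite -r2 gt_eqF ?exprn_gt0.
have sqrt2_gt0 : 0 < Num.sqrt 2 :> R by rewrite sqrtr_gt0.
have sqrtpi_gt0 : 0 < Num.sqrt pi :> R by rewrite sqrtr_gt0 pi_gt0.
set v := t * s / (r * Num.sqrt 2).
have v2 : v ^+ 2 *+ 2 = t ^+ 2 * s ^+ 2 / r ^+ 2.
  rewrite expr_div_n !exprMn r2 [Num.sqrt 2 ^+ 2]sqr_sqrtr // -mulr_natr.
  by field.
have sqrt_var : Num.sqrt (v ^+ 2 * pi *+ 2) = t * s * Num.sqrt pi / r.
  rewrite -mulrnAl v2 (_ : _ * pi = (t * s * Num.sqrt pi / r) ^+ 2).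
    by rewrite sqrtr_sqr ger0_norm // ltW // divr_gt0 // !mulr_gt0.
  by rewrite expr_div_n !exprMn r2 [Num.sqrt pi ^+ 2]sqr_sqrtr ?pi_ge0 //; field.
rewrite normal_pdfE ?gt_eqF ?divr_gt0 ?mulr_gt0 // /normal_peak /normal_fun.
rewrite sqrt_var v2 /psi_s /psi.
have expR_prod3 a b c u w : a * (b * expR u) * (c * expR w) = a * b * c * expR (u + w).
  by rewrite expRD; ring.
have expR_prod4 a b c d u w :
    a * (b * expR u) * (c * (d * expR w)) = a * b * c * d * expR (u + w).
  by rewrite expRD; ring.
rewrite expR_prod3 expR_prod4 r2.
congr (_ * expR _); first by field; rewrite !gt_eqF.
by rewrite [(x / r) ^+ 2]expr_div_n r2; field; rewrite ts_neq0 !gt_eqF.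
Qed.

Lemma integrable_psi_s_conv t s x : 0 < t -> 0 < s ->
  (@leb R).-integrable setT (fun y => (psi_s t y * psi_s s (x - y))%:E).
Proof.
move=> t0 s0; under eq_fun do rewrite psi_s_mul_normal_pdf // EFinM.
by apply: integrableZl => //; exact: integrable_normal_pdf.
Qed.

Lemma integral_psi_s_conv t s x : 0 < t -> 0 < s ->
  (\int[@leb R]_y (psi_s t y * psi_s s (x - y))%:E =
   (psi_s (Num.sqrt (t ^+ 2 + s ^+ 2)) x)%:E)%E.
Proof.
move=> t0 s0; under eq_integral do rewrite psi_s_mul_normal_pdf // EFinM.
rewrite integralZl //=; last exact: integrable_normal_pdf.
by rewrite integral_normal_pdf mule1.
Qed.

End Gaussian.

Definition Kop_integrable (R : realType) (s : R) (g : R -> R) (x : R) : Prop :=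
  (@leb R).-integrable setT (fun y => (g y * psi_s s (x - y))%:E).

Section Convolution.
Variable R : realType.
Variable s : R.
Hypothesis s_gt0 : 0 < s.
Implicit Types (g : R -> R) (x : R).

Lemma measurable_Kop_integrand g x : measurable_fun setT g ->
  measurable_fun setT (fun y => (g y * psi_s s (x - y))%:E).
Proof.
move=> mg; apply/measurable_EFinP; apply: measurable_funM => //.
have mxB : measurable_fun setT (fun y : R => x - y) by exact: measurable_funB.
exact: measurableT_comp (measurable_psi_s s) mxB.
Qed.

Lemma measurable_Kop g : measurable_fun setT g -> (forall y, 0 <= g y) ->
  measurable_fun setT (Kop s g).
Proof.
move=> mg g0.
pose F (z : measurableTypeR R * measurableTypeR R) := (g z.2 * psi_s s (z.1 - z.2))%:E.
have mF : measurable_fun setT F.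
  apply/measurable_EFinP; apply: measurable_funM.
    exact: measurableT_comp mg measurable_snd.
  apply: measurableT_comp (measurable_psi_s s) _.
  exact: measurable_funB measurable_fst measurable_snd.
have F0 z : (0 <= F z)%E by rewrite lee_fin mulr_ge0 ?psi_s_ge0.
have -> : Kop s g = fine \o fubini_F (@leb R) F by [].
exact: measurableT_comp (fine_measurable measurableT)
  (measurable_fun_fubini_tonelli_F _ mF F0).
Qed.

Lemma Kop_ge0 g x : (forall y, 0 <= g y) -> 0 <= Kop s g x.
Proof. by move=> g0; apply: Rintegral_ge0 => y _; rewrite mulr_ge0 ?psi_s_ge0. Qed.

Section Dominated.
Variables (t B : R) (g : R -> R).
Hypotheses (t_gt0 : 0 < t) (mg : measurable_fun setT g) (g_ge0 : forall y, 0 <= g y).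
Hypothesis g_le : forall y, g y <= B * psi_s t y.

Let integrable_dominant x : (@leb R).-integrable setT
  (fun y => (B * (psi_s t y * psi_s s (x - y)))%:E).
Proof.
under eq_fun do rewrite EFinM.
by apply: integrableZl => //; exact: integrable_psi_s_conv.
Qed.

Let le_dominant x y : g y * psi_s s (x - y) <= B * (psi_s t y * psi_s s (x - y)).
Proof. by rewrite mulrA ler_wpM2r ?psi_s_ge0. Qed.

Lemma Kop_integrable_dominated x : Kop_integrable s g x.
Proof.
apply: le_integrable (integrable_dominant x) => //.
  exact: measurable_Kop_integrand.
move=> y _; rewrite !abse_EFin lee_fin.
rewrite ger0_norm; last by rewrite mulr_ge0 // psi_s_ge0.
exact: le_trans (le_dominant x y) (ler_norm _).
Qed.

Lemma Kop_le_psi_s x : Kop s g x <= B * psi_s (Num.sqrt (t ^+ 2 + s ^+ 2)) x.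
Proof.
apply: le_trans (le_Rintegral _ _ (integrable_dominant x) (fun y _ => le_dominant x y)) _.
- by [].
- exact: Kop_integrable_dominated.
rewrite RintegralZl //; last exact: integrable_psi_s_conv.
by rewrite /Rintegral integral_psi_s_conv.
Qed.

End Dominated.

Lemma Kop_sum (I : Type) (r : seq I) (c : I -> R) (h : I -> R -> R) x :
  (forall i, Kop_integrable s (h i) x) ->
  Kop s (fun y => \sum_(i <- r) c i * h i y) x = \sum_(i <- r) c i * Kop s (h i) x.
Proof.
move=> hx; rewrite /Kop /Rintegral.
under eq_integral do rewrite mulr_suml -sumEFin.
rewrite integral_sum //; last first.
  move=> i; under eq_fun do rewrite -mulrA EFinM.
  exact: integrableZl (hx i).
rewrite -sum_fine; last first.
  move=> i _; under eq_integral do rewrite -mulrA EFinM.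
  by rewrite (integralZl _ (hx i)) // fin_numM // (integrable_fin_num _ (hx i)).
apply: eq_bigr => i _; under eq_integral do rewrite -mulrA EFinM.
by rewrite (integralZl _ (hx i)) // fineM // (integrable_fin_num _ (hx i)).
Qed.

End Convolution.

Section Iterates.
Variables (R : realType) (s M : R) (f : R -> R).
Hypotheses (s_gt0 : 0 < s) (mf : measurable_fun setT f).
Hypotheses (f_ge0 : forall y, 0 <= f y) (f_le : forall y, f y <= M * psi y).

Let M_ge0 : 0 <= M.
Proof. by have := le_trans (f_ge0 0) (f_le 0); rewrite pmulr_lge0 ?psi_gt0. Qed.

Let width_sqr_ge0 i : 0 <= 1 + i%:R * s ^+ 2.
Proof. by rewrite addr_ge0 // mulr_ge0 // sqr_ge0. Qed.

Let width_ge1 i : 1 <= Num.sqrt (1 + i%:R * s ^+ 2).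
Proof. by rewrite -[X in X <= _]sqrtr1 ler_wsqrtr // lerDl mulr_ge0 ?sqr_ge0. Qed.

Lemma Kiter_spec i : [/\ measurable_fun setT (Kiter s i f),
  forall y, 0 <= Kiter s i f y &
  forall y, Kiter s i f y <= M * psi_s (Num.sqrt (1 + i%:R * s ^+ 2)) y].
Proof.
elim: i => [|i [mi ge0i lei]].
  by split=> // y; rewrite mul0r addr0 sqrtr1 psi_s1; exact: f_le.
have width_gt0 := lt_le_trans ltr01 (width_ge1 i).
split=> [|y|y]; rewrite [Kiter _ _ _]/=.
- exact: measurable_Kop.
- exact: Kop_ge0.
apply: le_trans (Kop_le_psi_s s_gt0 width_gt0 mi ge0i lei y) _.
by rewrite sqr_sqrtr // -[i.+1]addn1 natrD mulrDl mul1r addrA.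
Qed.

Lemma Kiter_ge0 i y : 0 <= Kiter s i f y.
Proof. by have [] := Kiter_spec i. Qed.

Lemma Kop_integrable_Kiter i x : Kop_integrable s (Kiter s i f) x.
Proof.
have [mi ge0i lei] := Kiter_spec i.
have width_gt0 := lt_le_trans ltr01 (width_ge1 i).
exact: (Kop_integrable_dominated s_gt0 width_gt0 mi ge0i lei x).
Qed.

Lemma Kiter_le_psi_scale i p x : 0 <= p -> p ^+ 2 * (1 + i%:R * s ^+ 2) <= 1 ->
  Kiter s i f x <= M * psi (p * x).
Proof.
move=> p0 hp; have [_ _ lei] := Kiter_spec i.
apply: le_trans (lei x) _; rewrite ler_wpM2l // psi_s_le_psi //.
by rewrite sqr_sqrtr.
Qed.

(* The coefficients of f_(j+1) are [m = 0] + c_m - c_(m-1). *)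
Lemma fseq_Kiter_combination j : exists c : nat -> R,
  [/\ forall m, (j < m)%N -> c m = 0,
      forall x, fseq s f j x = \sum_(m < j.+1) c m * Kiter s m f x &
      \sum_(m < j.+1) `|c m| <= 2 ^+ j.+1 - 1].
Proof.
elim: j => [|j [c [c_eq0 fsE c_norm]]].
  exists (fun m => (m == 0)%:R); split=> [[]//|x|].
    by rewrite big_ord1 mul1r.
  by rewrite big_ord1 normr1 expr1; lra.
pose c_pred m := if m is m'.+1 then c m' else 0.
exists (fun m => (m == 0)%:R + c m - c_pred m); split.
- case=> [//|m] jm; rewrite /c_pred !c_eq0 ?add0r ?oppr0 //.
  exact: ltnW.
- move=> x; rewrite /= /Delta.
  have -> : Kop s (fseq s f j) x = \sum_(m < j.+1) c m * Kiter s m.+1 f x.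
    rewrite (_ : fseq s f j = fun y => \sum_(m < j.+1) c m * Kiter s m f y).
      exact: (Kop_sum _ _ (fun m : 'I_j.+1 => Kop_integrable_Kiter m x)).
    by apply/funext => y; rewrite fsE.
  under eq_bigr do rewrite mulrBl mulrDl.
  rewrite sumrB big_split /=.
  have -> : \sum_(m < j.+2) (m == 0 :> nat)%:R * Kiter s m f x = f x.
    by rewrite big_ord_recl big1 ?addr0 ?mul1r // => m _; rewrite mul0r.
  have -> : \sum_(m < j.+2) c m * Kiter s m f x = fseq s f j x.
    by rewrite big_ord_recr /= c_eq0 // mul0r addr0 fsE.
  have -> : \sum_(m < j.+2) c_pred m * Kiter s m f x =
      \sum_(m < j.+1) c m * Kiter s m.+1 f x.
    by rewrite big_ord_recl /= mul0r add0r.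
  lra.
- apply: le_trans (_ : \sum_(m < j.+2) (`|(m == 0)%:R| + `|c m| + `|c_pred m|) <= _).
    apply: ler_sum => m _; apply: le_trans (ler_normB _ _) _.
    by rewrite lerD2r ler_normD.
  rewrite !big_split /= big_ord_recl big1 ?normr1 ?addr0; last first.
    by move=> m _; rewrite normr0.
  rewrite big_ord_recr /= c_eq0 // normr0 addr0.
  rewrite [\sum_(i < j.+2) _]big_ord_recl /= normr0 add0r.
  by move: c_norm; rewrite !exprS; lra.
Qed.

Lemma fseq_le k x B : (forall m, (m <= k)%N -> Kiter s m f x <= B) ->
  fseq s f k x <= (2 ^+ k.+1 - 1) * B.
Proof.
move=> KB; have [c [_ fsE c_norm]] := fseq_Kiter_combination k.
have B_ge0 : 0 <= B := le_trans (f_ge0 x) (KB 0%N isT).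
rewrite fsE; apply: le_trans (_ : \sum_(m < k.+1) `|c m| * B <= _).
  apply: ler_sum => m _; apply: le_trans (ler_norm _) _.
  by rewrite normrM ler_wpM2l // ger0_norm ?Kiter_ge0 // KB // -ltnS.
by rewrite -mulr_suml ler_wpM2r.
Qed.

Lemma fseq_le_psi_scale k p x : 0 <= p -> p ^+ 2 * (1 + k%:R * s ^+ 2) <= 1 ->
  fseq s f k x <= (2 ^+ k.+1 - 1) * (M * psi (p * x)).
Proof.
move=> p0 hp; apply: fseq_le => m m_le_k; apply: Kiter_le_psi_scale p0 _.
apply: le_trans hp; rewrite ler_wpM2l ?sqr_ge0 // lerD2l.
by rewrite ler_wpM2r ?sqr_ge0 // ler_nat.
Qed.

End Iterates.

(* No measurability is needed: both integrals are suprema over nonnegative simple minorants. *)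
Lemma ge0_le_integralT (R : realType) (f g : R -> R) :
  (forall x, 0 <= f x) -> (forall x, f x <= g x) ->
  (\int[@leb R]_x (f x)%:E <= \int[@leb R]_x (g x)%:E)%E.
Proof.
move=> f_ge0 f_le_g.
have g_ge0 x : (0 <= (g x)%:E)%E by rewrite lee_fin (le_trans (f_ge0 x)).
have f_ge0' x : (0 <= (f x)%:E)%E by rewrite lee_fin.
rewrite (@ge0_integralTE _ _ _ (@leb R) _ f_ge0') (@ge0_integralTE _ _ _ (@leb R) _ g_ge0).
apply: ereal_sup_le => _ [h h_le <-]; exists h => //= x.
by rewrite (le_trans (h_le x)) ?lee_fin.
Qed.

Section Truncation.
Variables (R : realType) (s : R) (f : R -> R) (k : nat).
Hypotheses (mf : measurable_fun setT f) (f_ge0 : forall x, 0 <= f x).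
Hypothesis f_int1 : (\int[@leb R]_x (f x)%:E = 1)%E.

Lemma gseqE x : gseq s f k x = if x \in Jset s f k then fseq s f k x else f x / 2.
Proof.
rewrite /gseq !indicE in_setC.
by case: (x \in Jset s f k); rewrite /= (mulr1, mulr0) (mulr0, mulr1) (addr0, add0r).
Qed.

Lemma gseq_ge_half x : f x / 2 <= gseq s f k x.
Proof. by rewrite gseqE; case: ifPn => // /set_mem/ltW. Qed.

Lemma half_le_integral_gseq : ((2^-1)%:E <= \int[@leb R]_x (gseq s f k x)%:E)%E.
Proof.
apply: le_trans (ge0_le_integralT _ gseq_ge_half); last by move=> x; rewrite divr_ge0.
under eq_integral do rewrite EFinM muleC.
rewrite ge0_integralZl //= ?f_int1 ?mule1 //; first exact/measurable_EFinP.
by move=> x _; rewrite lee_fin.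
Qed.

Lemma hseq_half_le_gseq x : hseq s f k x / 2 <= gseq s f k x.
Proof.
have g_ge0 : 0 <= gseq s f k x by rewrite (le_trans _ (gseq_ge_half x)) ?divr_ge0.
rewrite /hseq /Rintegral.
(* An infinite integral makes Rintegral return 0, and then h_k = g_k / 0 = 0. *)
move: half_le_integral_gseq.
case: (\int[@leb R]_y (gseq s f k y)%:E)%E => [r | | ] //= r_ge.
  rewrite lee_fin in r_ge; have r_gt0 : 0 < r by apply: lt_le_trans r_ge.
  by rewrite !ler_pdivrMr // -mulrA ler_peMr //; lra.
by rewrite invr0 mulr0 mul0r.
Qed.

Lemma max_fseq_gseq_hseq_le x B : fseq s f k x <= B -> f x <= B ->
  Num.max (fseq s f k x) (Num.max (gseq s f k x) (hseq s f k x / 2)) <= B.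
Proof.
move=> fk_le f_le.
have g_le : gseq s f k x <= B.
  by rewrite gseqE; case: ifP => // _; apply: le_trans f_le; rewrite ler_pdivrMr // ler_peMr //; lra.
by rewrite !ge_max fk_le g_le (le_trans (hseq_half_le_gseq x)).
Qed.

End Truncation.

Lemma scaled_width_le1 (R : realType) (p s : R) (i : nat) :
  0 < p -> (0 < i)%N -> 0 < s -> s < 1 - p `^ i%:R^-1 ->
  p ^+ 2 * (1 + i%:R * s ^+ 2) <= 1.
Proof.
move=> p_gt0 i_gt0 s_gt0 hs.
(* With d = 1 - q > s: q^(2i) <= e^(-2id), 1 + i s^2 <= e^(i s^2) and s^2 < d <= 2d. *)
set q := p `^ i%:R^-1 in hs.
have q_gt0 : 0 < q by rewrite powR_gt0.
have qi : q ^+ i = p.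
  by rewrite -powR_mulrn ?ltW // -powRrM mulVf ?powRr1 ?ltW // pnatr_eq0 -lt0n.
have q_le : q <= expR (- (1 - q)) by have := expR_ge1Dx (- (1 - q)); lra.
have s2_le : s ^+ 2 <= 2 * (1 - q) by nra.
apply: le_trans (_ : expR (- (1 - q)) ^+ (2 * i) * expR (i%:R * s ^+ 2) <= 1).
  apply: ler_pM.
  - exact: sqr_ge0.
  - by rewrite addr_ge0 // mulr_ge0 // sqr_ge0.
  - by rewrite -qi -exprM mulnC lerXn2r // ?nnegrE ?expR_ge0 // ltW.
  - exact: expR_ge1Dx.
have i_ge0 : 0 <= i%:R :> R by [].
rewrite -expRM_natl -expRD -[X in _ <= X]expR0 ler_expR natrM; nra.
Qed.

Lemma inH_density (R : realType) (beta gamma lplus : R) (L : {poly R})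
    (eps C alpha xi M : R) (f : R -> R) :
  0 < beta -> inH beta gamma lplus L eps C alpha xi M f ->
  [/\ measurable_fun setT f, forall x, 0 <= f x,
      (\int[@leb R]_x (f x)%:E = 1)%E & forall x, f x <= M * psi x].
Proof.
move=> beta_gt0 fH.
have [r r_itv] : exists r : nat, r%:R < beta <= r.+1%:R.
  have /andP[n_le n_gt] := truncn_itv (ltW beta_gt0).
  have [n_eq|n_neq] := eqVneq (Num.truncn beta)%:R beta; last first.
    by exists (Num.truncn beta); rewrite lt_neqAle n_neq n_le (ltW n_gt).
  have n_gt0 : (0 < Num.truncn beta)%N by rewrite -(ltr0n R) n_eq.
  exists (Num.truncn beta).-1; rewrite prednK // n_eq lexx andbT.
  by rewrite -[X in _ < X]n_eq ltr_nat ltn_predL.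
by have [? [? [? [_ [_ [_ [_ [_ [? _]]]]]]]]] := fH r r_itv.
Qed.

Theorem lemma14 (R : realType) (beta : R) (k : nat)
  (gamma lplus : R) (L : {poly R}) (eps C alpha xi M : R) (f : R -> R) (p : R) :
  0 < beta -> (2 * k)%:R < beta <= (2 * k + 2)%:R ->
  0 < gamma -> 0 < lplus -> 0 < eps -> 0 < C -> 0 < alpha -> 0 < xi -> 0 < M ->
  inH beta gamma lplus L eps C alpha xi M f ->
  0 < p < 1 ->
  forall x : R,
    (forall (i : nat) (s : R), (0 < i)%N -> 0 < s -> s < 1 - p `^ (i%:R^-1) ->
       Kiter s i f x <= M * (2 / Num.sqrt 3) ^+ i * psi (p * x)) /\
    (forall s : R, 0 < s ->
       (if k == 0%N then s < 1 else s < 1 - p `^ (k%:R^-1)) ->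
       Num.max (fseq s f k x) (Num.max (gseq s f k x) (hseq s f k x / 2))
         <= 2 * M * (4 / Num.sqrt 3) ^+ k * psi (p * x)).
Proof.
move=> beta_gt0 _ _ _ _ _ _ _ M_gt0 fH /andP[p_gt0 p_lt1] x.
have [mf f_ge0 f_int1 f_le] := inH_density beta_gt0 fH.
have p_ge0 := ltW p_gt0.
have sqrt3_le2 : Num.sqrt 3 <= 2 :> R.
  have := sqr_sqrtr (ler0n R 3); have := sqrtr_ge0 (3 : R); nra.
have B_ge0 : 0 <= M * psi (p * x) by rewrite mulr_ge0 ?psi_ge0 ?ltW.
split=> [i s i_gt0 s_gt0 hs | s s_gt0 hs].
  apply: le_trans (Kiter_le_psi_scale s_gt0 mf f_ge0 f_le x p_ge0
    (scaled_width_le1 p_gt0 i_gt0 s_gt0 hs)) _.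
  rewrite -mulrA; apply: ler_wpM2l; first exact: ltW.
  rewrite ler_peMl ?psi_ge0 // exprn_ege1 //.
  by rewrite ler_pdivlMr ?sqrtr_gt0 // mul1r.
have width_le1 : p ^+ 2 * (1 + k%:R * s ^+ 2) <= 1.
  case: eqP hs => [-> | /eqP k_neq0] hs; first by rewrite mul0r addr0 mulr1; nra.
  by rewrite (scaled_width_le1 p_gt0 _ s_gt0 hs) // lt0n.
have f_le_B : f x <= M * psi (p * x).
  by apply: (Kiter_le_psi_scale s_gt0 mf f_ge0 f_le x p_ge0 (i := 0)); nra.
have -> : 2 * M * (4 / Num.sqrt 3) ^+ k * psi (p * x) =
    2 * (4 / Num.sqrt 3) ^+ k * (M * psi (p * x)) by ring.
apply: (@le_trans _ _ (2 ^+ k.+1 * (M * psi (p * x)))).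
  apply: (max_fseq_gseq_hseq_le mf f_ge0 f_int1).
    apply: le_trans (fseq_le_psi_scale s_gt0 mf f_ge0 f_le x p_ge0 width_le1) _.
    by rewrite ler_wpM2r // lerBlDr lerDl.
  by apply: le_trans f_le_B _; rewrite ler_peMl //; apply: exprn_ege1; lra.
rewrite exprS ler_wpM2r // ler_wpM2l // lerXn2r ?nnegrE ?divr_ge0 ?sqrtr_ge0 //.
by rewrite ler_pdivlMr ?sqrtr_gt0 //; lra.
Qed.
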